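(* Let $R$ be a finite commutative ring and let $F_R$ be a unitary operator on the space with orthonormal basis $\{\ket{r}:r\in R\}$ satisfying the control/target inversion property: for all $s\in R$, $(F_R^{\dagger}\otimes F_R)A_s(F_R\otimes F_R^{\dagger})=B_s$, where $A_s\ket{x}\ket{y}=\ket{x}\ket{y+sx}$ and $B_s\ket{x}\ket{y}=\ket{x+sy}\ket{y}$. Let $m\ge1$ and let $F_{R,m}$ be the quantum Fourier transform over the ring $M_m(R)$ of $m\times m$ matrices over $R$ defined from $F_R$. Then for every $S\in M_m(R)$, \[ (F_{R,m}^{\dagger}\otimes F_{R,m})\,L_S\,(F_{R,m}\otimes F_{R,m}^{\dagger}) = R'_S, \] where $L_S\ket{X}\ket{Y}=\ket{X}\ket{Y+SX}$ and $R'_S\ket{X}\ket{Y}=\ket{X+YS}\ket{Y}$ for all $X,Y\in M_m(R)$.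
   Context: A matrix $X=(x_{ij})\in M_m(R)$ is encoded in an $m\times m$ array of $R$-valued registers as the product state $\ket{X}=\bigotimes_{i=1}^m\bigotimes_{j=1}^m\ket{x_{ij}}$ (ordered $x_{11},x_{12},\dots,x_{1m},x_{21},\dots,x_{mm}$). The quantum Fourier transform over $M_m(R)$ is the linear operator $F_{R,m}:\ket{X}\mapsto\bigotimes_{i=1}^m\bigotimes_{j=1}^m F_R\ket{x_{ji}}$, i.e. apply $F_R$ to every register and transpose the array of registers. *)

From HB Require Import structures.
From mathcomp Require Import all_boot all_order all_algebra.
Set Implicit Arguments. Unset Strict Implicit. Unset Printing Implicit Defensive.
Import Order.TTheory GRing.Theory Num.Theory.
Local Open Scope ring_scope.

(* Operators on the finite-dimensional Hilbert space with orthonormal basis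
   {|i> : i in I} are represented by their matrix entries:
   op C I i j = <i| A |j>. *)
Definition op (C : numClosedFieldType) (I : finType) := I -> I -> C.

Definition op_id (C : numClosedFieldType) (I : finType) : op C I :=
  fun i j => (i == j)%:R.

Definition op_comp (C : numClosedFieldType) (I : finType) (A B : op C I) : op C I :=
  fun i k => \sum_(j : I) A i j * B j k.

Definition op_adj (C : numClosedFieldType) (I : finType) (A : op C I) : op C I :=
  fun i j => (A j i)^*.

Definition op_tensor (C : numClosedFieldType) (I J : finType) (A : op C I) (B : op C J)
  : op C (I * J)%type :=
  fun ij kl => A ij.1 kl.1 * B ij.2 kl.2.

Definition unitary (C : numClosedFieldType) (I : finType) (U : op C I) : Prop :=
  op_comp (op_adj U) U = @op_id C I /\ op_comp U (op_adj U) = @op_id C I.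

Definition basis_map (C : numClosedFieldType) (I : finType) (f : I -> I) : op C I :=
  fun i j => (i == f j)%:R.

Definition A_op (C : numClosedFieldType) (R : finComPzRingType) (s : R) : op C (R * R)%type :=
  basis_map C (fun xy : R * R => (xy.1, xy.2 + s * xy.1)).
Definition B_op (C : numClosedFieldType) (R : finComPzRingType) (s : R) : op C (R * R)%type :=
  basis_map C (fun xy : R * R => (xy.1 + s * xy.2, xy.2)).

(* Quantum Fourier transform over M_m(R): apply F_R to every register and
   transpose the array of registers:
   |X> |-> (x) _{i,j} F_R |x_{ji}>, so <Z| F_{R,m} |X> = prod_{i,j} <z_ij|F_R|x_ji>. *)
Definition qft_mat (C : numClosedFieldType) (R : finComPzRingType) (m : nat)
  (F : op C R) : op C 'M[R]_m :=
  fun Z X => \prod_(i < m) \prod_(j < m) F (Z i j) (X j i).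

Definition L_op (C : numClosedFieldType) (R : finComPzRingType) (m : nat) (S : 'M[R]_m)
  : op C ('M[R]_m * 'M[R]_m)%type :=
  basis_map C (fun XY : 'M[R]_m * 'M[R]_m => (XY.1, XY.2 + S *m XY.1)).
Definition R'_op (C : numClosedFieldType) (R : finComPzRingType) (m : nat) (S : 'M[R]_m)
  : op C ('M[R]_m * 'M[R]_m)%type :=
  basis_map C (fun XY : 'M[R]_m * 'M[R]_m => (XY.1 + XY.2 *m S, XY.2)).

From HB Require Import structures.
From mathcomp Require Import all_boot all_order all_algebra.
From Stdlib Require Import FunctionalExtensionality.
Import Order.TTheory GRing.Theory Num.Theory.
Local Open Scope ring_scope.

(* Conjugating by the unitary W = F ⊗ F† turns the inversion property into the
   intertwining relation A_s W = W B_s, whose matrix entries read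
     F(x, a) · conj F(b, y - s x) = F(x, a + s b) · conj F(b, y).
   The entry of F_{R,m} ⊗ F_{R,m}† at ((X, Y), (A, B)) is the product of the
   factors F(x_ki, a_ik) and conj F(b_ij, y_ji) over all registers.  The shift
   Y ↦ Y - SX splits into the m³ elementary shifts y_ji ↦ y_ji - s_jk x_ki, and
   the entry identity trades each of them for a_ik ↦ a_ik + b_ij s_jk; together
   these make up A ↦ A + BS.  Hence
     L_S (F_{R,m} ⊗ F_{R,m}†) = (F_{R,m} ⊗ F_{R,m}†) R'_S,
   which is equivalent to the theorem because F_{R,m} is again unitary. *)

Section OpAlgebra.
Context {C : numClosedFieldType}.

Lemma op_ext {I : finType} (A B : op C I) : (forall i j, A i j = B i j) -> A = B.
Proof.
by move=> eqAB; apply: functional_extensionality => i; apply: functional_extensionality.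
Qed.

Lemma op_compA {I : finType} (A B D : op C I) :
  op_comp (op_comp A B) D = op_comp A (op_comp B D).
Proof.
apply: op_ext => i k; rewrite /op_comp.
under eq_bigr do rewrite big_distrl /=.
rewrite exchange_big /=; apply: eq_bigr => l _.
by rewrite big_distrr /=; apply: eq_bigr => j _; rewrite mulrA.
Qed.

Lemma op_comp1l {I : finType} (A : op C I) : op_comp (@op_id C I) A = A.
Proof.
apply: op_ext => i k; rewrite /op_comp /op_id (bigD1 i) //= eqxx mul1r.
by rewrite big1 ?addr0 // => j; rewrite eq_sym => /negPf ->; rewrite mul0r.
Qed.

Lemma op_adjK {I : finType} (A : op C I) : op_adj (op_adj A) = A.
Proof. by apply: op_ext => i j; rewrite /op_adj conjCK. Qed.

Lemma op_adj_tensor {I J : finType} (A : op C I) (B : op C J) :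
  op_adj (op_tensor A B) = op_tensor (op_adj A) (op_adj B).
Proof. by apply: op_ext => i j; rewrite /op_adj /op_tensor rmorphM. Qed.

Lemma op_adj_tensor_adjr {I J : finType} (A : op C I) (B : op C J) :
  op_adj (op_tensor A (op_adj B)) = op_tensor (op_adj A) B.
Proof. by rewrite op_adj_tensor op_adjK. Qed.

Lemma op_tensor_comp {I J : finType} (A B : op C I) (D E : op C J) :
  op_comp (op_tensor A D) (op_tensor B E) = op_tensor (op_comp A B) (op_comp D E).
Proof.
apply: op_ext => i k; rewrite /op_comp /op_tensor.
rewrite -(pair_bigA _ (fun u v => A i.1 u * D i.2 v * (B u k.1 * E v k.2))) /=.
rewrite big_distrl /=; apply: eq_bigr => u _; rewrite big_distrr /=.
by apply: eq_bigr => v _; rewrite mulrACA.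
Qed.

Lemma op_tensor_id {I J : finType} :
  op_tensor (@op_id C I) (@op_id C J) = @op_id C (I * J)%type.
Proof.
by apply: op_ext => -[i1 i2] [k1 k2]; rewrite /op_tensor /op_id -natrM mulnb xpair_eqE.
Qed.

Lemma op_comp_basis_mapl {I : finType} {f g : I -> I} (A : op C I) :
  cancel f g -> cancel g f -> forall i k, op_comp (basis_map C f) A i k = A (g i) k.
Proof.
move=> fK gK i k; rewrite /op_comp /basis_map (bigD1 (g i)) //= gK eqxx mul1r.
rewrite big1 ?addr0 // => j neq_j_gi; case: eqP => [def_i|]; last by rewrite mul0r.
by move: neq_j_gi; rewrite def_i fK eqxx.
Qed.

Lemma op_comp_basis_mapr {I : finType} (f : I -> I) (A : op C I) i k :
  op_comp A (basis_map C f) i k = A i (f k).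
Proof.
rewrite /op_comp /basis_map (bigD1 (f k)) //= eqxx mulr1.
by rewrite big1 ?addr0 // => j /negPf ->; rewrite mulr0.
Qed.

Lemma unitary_adj {I : finType} {U : op C I} : unitary U -> unitary (op_adj U).
Proof. by case=> U'U UU'; split; rewrite op_adjK. Qed.

Lemma unitary_tensor {I J : finType} {U : op C I} {V : op C J} :
  unitary U -> unitary V -> unitary (op_tensor U V).
Proof.
by case=> U'U UU' [V'V VV']; split;
  rewrite op_adj_tensor op_tensor_comp ?U'U ?V'V ?UU' ?VV' op_tensor_id.
Qed.

Lemma unitary_conj_iff {I : finType} {W A B : op C I} : unitary W ->
  op_comp (op_comp (op_adj W) A) W = B <-> op_comp A W = op_comp W B.
Proof.
case=> W'W WW'; split=> [<- | AW_WB].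
  by rewrite !op_compA -[op_comp W _]op_compA WW' op_comp1l.
by rewrite op_compA AW_WB -op_compA W'W op_comp1l.
Qed.

Lemma unitary_orthonormal_cols {I : finType} {U : op C I} : unitary U ->
  forall a a', \sum_z (U z a)^* * U z a' = (a == a')%:R.
Proof. by case=> U'U _ a a'; have := congr1 (fun M => M a a') U'U. Qed.

Lemma unitary_orthonormal_rows {I : finType} {U : op C I} : unitary U ->
  forall a a', \sum_z U a z * (U a' z)^* = (a == a')%:R.
Proof. by case=> _ UU' a a'; have := congr1 (fun M => M a a') UU'. Qed.

End OpAlgebra.

Section ShiftProducts.
Context {C : comPzSemiRingType} {R : pzRingType} {P Q : finType}.
Context {f : P -> R -> C} {g : Q -> R -> C} {x : P -> R} {b : Q -> R}.
Hypothesis shift_fg :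
  forall p q s a y, f p a * g q (y - s * x p) = f p (a + s * b q) * g q y.

Lemma prod_shift1 p0 q0 s (a : P -> R) (y : Q -> R) :
  (\prod_p f p (a p)) * \prod_q g q (if q0 == q then y q - s * x p0 else y q)
  = (\prod_p f p (if p0 == p then a p + s * b q0 else a p)) * \prod_q g q (y q).
Proof.
rewrite (bigD1 p0) // [in RHS](bigD1 p0) // (bigD1 q0) // [in RHS](bigD1 q0) //=.
rewrite !eqxx mulrACA shift_fg mulrACA; congr (_ * _ * (_ * _)).
  by apply: eq_bigr => p; rewrite eq_sym => /negPf ->.
by apply: eq_bigr => q; rewrite eq_sym => /negPf ->.
Qed.

Lemma prod_shift {T : Type} (pp : T -> P) (qq : T -> Q) (c : T -> R) (r : seq T)
    (a : P -> R) (y : Q -> R) :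
  (\prod_p f p (a p)) * \prod_q g q (y q - \sum_(t <- r | qq t == q) c t * x (pp t))
  = (\prod_p f p (a p + \sum_(t <- r | pp t == p) c t * b (qq t))) * \prod_q g q (y q).
Proof.
elim: r => [|t r IHr] in a y *.
  by congr (_ * _); apply: eq_bigr => i _; rewrite big_nil ?subr0 ?addr0.
pose y' q := if qq t == q then y q - c t * x (pp t) else y q.
transitivity ((\prod_p f p (a p)) *
              \prod_q g q (y' q - \sum_(t <- r | qq t == q) c t * x (pp t))).
  congr (_ * _); apply: eq_bigr => q _; rewrite big_cons /y'.
  by case: ifP; rewrite // opprD addrA.
rewrite IHr prod_shift1; congr (_ * _); apply: eq_bigr => p _.
by rewrite big_cons; case: ifP => // _; rewrite addrAC -addrA.
Qed.

End ShiftProducts.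

Section MatrixSums.
Context {R : finType} {m : nat}.

Lemma sum_mx_prod {C : comPzSemiRingType} (G : 'I_m -> 'I_m -> R -> C) :
  \sum_(Z : 'M[R]_m) \prod_i \prod_j G i j (Z i j) = \prod_i \prod_j \sum_z G i j z.
Proof.
rewrite pair_bigA /= bigA_distr_bigA /=.
rewrite (reindex (@Matrix R m m)) /=; last first.
  by apply: onW_bij; exists (@mx_val R m m) => [h|[h]].
by apply: eq_bigr => h _; rewrite pair_bigA; apply: eq_bigr => -[].
Qed.

Lemma prod_eq_entries {C : comPzSemiRingType} (X X' : 'M[R]_m) :
  \prod_i \prod_j ((X i j == X' i j)%:R : C) = (X == X')%:R.
Proof.
have [-> | neqXX'] := eqVneq X X'.
  by rewrite !big1 // => i _; rewrite big1 // => j _; rewrite eqxx.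
have [i /existsP [j neq_ij]] : exists i, [exists j, X i j != X' i j].
  apply/existsP; apply: contraNT neqXX' => /existsPn eqX.
  by apply/eqP/matrixP => i j; have /existsPn/(_ j)/negbNE/eqP := eqX i.
by rewrite (bigD1 i) // [\prod_(j0 < m) _ in LHS](bigD1 j) //= (negPf neq_ij) !mul0r.
Qed.

End MatrixSums.

Section MulmxTriples.
Context {K : comPzSemiRingType} {m : nat}.

Lemma mulmx_sum_triples_l (S X : 'M[K]_m) (q : 'I_m * 'I_m) :
  (S *m X) q.2 q.1 = \sum_(t : 'I_m * 'I_m * 'I_m | t.1 == q) S t.1.2 t.2 * X t.2 t.1.1.
Proof.
rewrite (eq_bigl (fun t => (t.1 == q) && true)); last by move=> t; rewrite andbT.
by rewrite -(pair_big_dep (pred1 q) (fun _ _ => true)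
                          (fun q k => S q.2 k * X k q.1)) big_pred1_eq mxE.
Qed.

Lemma mulmx_sum_triples_r (B S : 'M[K]_m) (p : 'I_m * 'I_m) :
  (B *m S) p.2 p.1 = \sum_(t : 'I_m * 'I_m * 'I_m | (t.2, t.1.1) == p)
                       S t.1.2 t.2 * B t.1.1 t.1.2.
Proof.
case: p => k i /=.
rewrite (eq_bigl (fun t => (t.1.1 == i) && (t.2 == k))); last first.
  by move=> t; rewrite xpair_eqE andbC.
rewrite -(pair_big_dep (fun q => q.1 == i) (fun _ k' => k' == k)
                       (fun q k' => S q.2 k' * B q.1 q.2)) /=.
under eq_bigr do rewrite big_pred1_eq.
rewrite (eq_bigl (fun q => (q.1 == i) && true)); last by move=> q; rewrite andbT.
rewrite -(pair_big_dep (pred1 i) (fun _ _ => true) (fun i' j => S j k * B i' j)).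
by rewrite big_pred1_eq mxE; apply: eq_bigr => j _; rewrite mulrC.
Qed.

End MulmxTriples.

Section QFT.
Context {C : numClosedFieldType} {R : finComPzRingType} {F : op C R}.

Lemma inversion_shift {s} (hU : unitary F) :
  op_comp (op_comp (op_tensor (op_adj F) F) (A_op C s)) (op_tensor F (op_adj F))
    = B_op C s ->
  forall x a b y, F x a * (F b (y - s * x))^* = F x (a + s * b) * (F b y)^*.
Proof.
rewrite -op_adj_tensor_adjr => /(unitary_conj_iff (unitary_tensor hU (unitary_adj hU))).
move=> intertwine x a b y; have := congr1 (fun M => M (x, y) (a, b)) intertwine.
rewrite /= op_comp_basis_mapr (op_comp_basis_mapl (g := fun xy => (xy.1, xy.2 - s * xy.1))).
- by rewrite /op_tensor /op_adj.
- by case=> u v /=; rewrite addrK.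
- by case=> u v /=; rewrite subrK.
Qed.

Lemma qft_unitary m : unitary F -> unitary (@qft_mat C R m F).
Proof.
move=> hU; split; apply: op_ext => X X'; rewrite /op_comp /op_adj /qft_mat /op_id.
- transitivity (\sum_(Z : 'M[R]_m)
      \prod_i \prod_j ((F (Z i j) (X j i))^* * F (Z i j) (X' j i))).
    apply: eq_bigr => Z _; rewrite rmorph_prod -big_split; apply: eq_bigr => i _.
    by rewrite rmorph_prod -big_split.
  rewrite (sum_mx_prod (fun i j z => (F z (X j i))^* * F z (X' j i))).
  under eq_bigr do under eq_bigr do rewrite (unitary_orthonormal_cols hU).
  by rewrite exchange_big prod_eq_entries.
- transitivity (\sum_(Z : 'M[R]_m)
      \prod_j \prod_i (F (X i j) (Z j i) * (F (X' i j) (Z j i))^*)).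
    apply: eq_bigr => Z _; rewrite rmorph_prod -big_split exchange_big.
    by apply: eq_bigr => i _; rewrite rmorph_prod -big_split.
  rewrite (sum_mx_prod (fun j i z => F (X i j) z * (F (X' i j) z)^*)).
  under eq_bigr do under eq_bigr do rewrite (unitary_orthonormal_rows hU).
  by rewrite exchange_big prod_eq_entries.
Qed.

Section Shift.
Hypothesis shiftF :
  forall s x a b y, F x a * (F b (y - s * x))^* = F x (a + s * b) * (F b y)^*.

(* The triple t = ((i, j), k) couples the registers q = (i, j) and p = (k, i)
   through the coefficient s_jk. *)
Lemma qft_shift m (S X Y A B : 'M[R]_m) :
  qft_mat F X A * (qft_mat F B (Y - S *m X))^*
  = qft_mat F X (A + B *m S) * (qft_mat F B Y)^*.
Proof.
have entryY q : (Y - S *m X) q.2 q.1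
    = Y q.2 q.1 - \sum_(t | t.1 == q) S t.1.2 t.2 * X t.2 t.1.1.
  by rewrite -mulmx_sum_triples_l !mxE.
have entryA p : (A + B *m S) p.2 p.1
    = A p.2 p.1 + \sum_(t | (t.2, t.1.1) == p) S t.1.2 t.2 * B t.1.1 t.1.2.
  by rewrite -mulmx_sum_triples_r !mxE.
rewrite /qft_mat !rmorph_prod.
under eq_bigr do rewrite rmorph_prod.
under [in RHS]eq_bigr do rewrite rmorph_prod.
rewrite !pair_bigA /=.
under [E in _ * E = _]eq_bigr => q _ do rewrite entryY.
under [E in _ = E * _]eq_bigr => p _ do rewrite entryA.
exact: (prod_shift (f := fun p a => F (X p.1 p.2) a) (g := fun q y => (F (B q.1 q.2) y)^*)
  (fun p q s a y => shiftF s _ _ _ _)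
  (fun t => (t.2, t.1.1)) (fun t => t.1) (fun t => S t.1.2 t.2) (index_enum _)
  (fun p => A p.2 p.1) (fun q => Y q.2 q.1)).
Qed.

Lemma qft_intertwine m (S : 'M[R]_m) :
  let W := op_tensor (qft_mat F) (op_adj (qft_mat F)) in
  op_comp (L_op C S) W = op_comp W (R'_op C S).
Proof.
apply: op_ext => -[X Y] [A B]; rewrite op_comp_basis_mapr.
rewrite (op_comp_basis_mapl (g := fun XY => (XY.1, XY.2 - S *m XY.1))).
- exact: qft_shift.
- by case=> U V /=; rewrite addrK.
- by case=> U V /=; rewrite subrK.
Qed.

End Shift.
End QFT.

Theorem mainTheorem5 (C : numClosedFieldType) (R : finComPzRingType) (F : op C R)
  (hU : unitary F)
  (hinv : forall s : R,
     op_comp (op_comp (op_tensor (op_adj F) F) (A_op C s)) (op_tensor F (op_adj F))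
     = B_op C s)
  (m : nat) (hm : (1 <= m)%N) (S : 'M[R]_m) :
  op_comp (op_comp (op_tensor (op_adj (@qft_mat C R m F)) (@qft_mat C R m F)) (L_op C S))
          (op_tensor (@qft_mat C R m F) (op_adj (@qft_mat C R m F)))
  = R'_op C S.
Proof.
have unitaryQ := qft_unitary m hU.
rewrite -op_adj_tensor_adjr.
apply/(unitary_conj_iff (unitary_tensor unitaryQ (unitary_adj unitaryQ))).
exact: qft_intertwine (fun s => inversion_shift hU (hinv s)) m S.
Qed.
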